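(* Let $(X,d_X,\mu_X)$ be an mm-space with $X=\operatorname{supp}\mu_X$. Any measure $\mu\in\mathcal M(X;1)$ satisfying $\operatorname{diam}\operatorname{supp}\mu=\operatorname{diam}X<\infty$ is a maximal element of $\mathcal M(X;1)$ with respect to the Lipschitz order.
   Context: An mm-space is a triple $(X,d_X,\mu_X)$ where $(X,d_X)$ is a complete separable metric space and $\mu_X$ is a Borel probability measure on $X$. The 1-measurement is $\mathcal M(X;1):=\{f_*\mu_X \mid f:X\to\mathbb R \text{ is 1-Lipschitz}\}$, a set of Borel probability measures on $\mathbb R$. Two mm-spaces $X,Y$ are mm-isomorphic if there is an isometry $f:\operatorname{supp}\mu_X\to\operatorname{supp}\mu_Y$ with $f_*\mu_X=\mu_Y$. For mm-spaces $X,Y$, write $Y\prec X$ (Lipschitz order) if there is a 1-Lipschitz map $f:\operatorname{supp}\mu_X\to\operatorname{supp}\mu_Y$ with $f_*\mu_X=\mu_Y$; this is a partial order on mm-isomorphism classes. For Borel probability measures $\mu,\nu$ on $\mathbb R$, $\mu\prec\nu$ means $(\mathbb R,|\cdot|,\mu)\prec(\mathbb R,|\cdot|,\nu)$. An element $\mu\in\mathcal M(X;1)$ is maximal if every $\nu\in\mathcal M(X;1)$ with $\mu\prec\nu$ has $(\mathbb R,|\cdot|,\nu)$ mm-isomorphic to $(\mathbb R,|\cdot|,\mu)$. The diameter of a set $A$ is $\sup_{x,y\in A}d(x,y)$. *)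

From mathcomp Require Import all_boot all_order all_algebra.
From mathcomp Require Import all_classical all_reals all_analysis.
Set Implicit Arguments. Unset Strict Implicit. Unset Printing Implicit Defensive.
Import GRing.Theory Num.Theory.
Local Open Scope classical_set_scope.
Local Open Scope ring_scope.

Section MetricDefs.
Context {R : realType} {T : Type}.
Variable dist : T -> T -> R.

Definition is_metric : Prop :=
  [/\ (forall x y, 0 <= dist x y),
      (forall x y, dist x y = 0 <-> x = y),
      (forall x y, dist x y = dist y x) &
      (forall x y z, dist x z <= dist x y + dist y z)].

Definition metric_complete : Prop :=
  forall u : nat -> T,
    (forall e, 0 < e -> exists N, forall m n, (N <= m)%N -> (N <= n)%N ->
       dist (u m) (u n) < e) ->
    exists l, forall e, 0 < e -> exists N, forall n, (N <= n)%N -> dist (u n) l < e.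

Definition metric_separable : Prop :=
  exists u : nat -> T, forall x e, 0 < e -> exists n, dist x (u n) < e.

Definition metric_open (A : set T) : Prop :=
  forall x, A x -> exists2 r, 0 < r & [set y | dist x y < r] `<=` A.

(** diameter of a set, as an extended real (sup of the empty set is -oo) *)
Definition diam (A : set T) : \bar R :=
  ereal_sup [set e | exists x y, [/\ A x, A y & e = (dist x y)%:E]].

Definition lipschitz1 (f : T -> R) : Prop :=
  forall x y, `|f x - f y| <= dist x y.

Definition supp (mu : set T -> \bar R) : set T :=
  [set x | forall r : R, 0 < r -> (0 < mu [set y | (dist x y < r)%R])%E].

End MetricDefs.

Definition mm_space {R : realType} (d : measure_display) (T : measurableType d)
    (dist : T -> T -> R) : Prop :=
  [/\ is_metric dist, metric_complete dist, metric_separable dist &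
      forall A : set T, measurable A <-> <<s metric_open dist >> A].

Definition distR {R : realType} (x y : R) : R := `|x - y|.

Definition suppR {R : realType} (mu : set R -> \bar R) : set R := supp distR mu.

(** nu belongs to the 1-measurement M(X;1): nu = f_* muX for a 1-Lipschitz f *)
Definition measurement1 {R : realType} (d : measure_display) (T : measurableType d)
    (dist : T -> T -> R) (muX : set T -> \bar R) (nu : set R -> \bar R) : Prop :=
  exists f : T -> R, lipschitz1 dist f /\
    forall A : set R, measurable A -> nu A = muX (f @^-1` A).

(** Lipschitz order on measures on R: [lip_le mu nu] is mu ≺ nu, i.e. there is a
    1-Lipschitz map f : supp nu -> supp mu with f_* nu = mu. *)
Definition lip_le {R : realType} (mu nu : set R -> \bar R) : Prop :=
  exists f : R -> R,
    [/\ (forall x y, suppR nu x -> suppR nu y -> `|f x - f y| <= `|x - y|),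
        (forall x, suppR nu x -> suppR mu (f x)) &
        (forall A : set R, measurable A -> mu A = nu (suppR nu `&` f @^-1` A))].

Definition mm_iso_R {R : realType} (mu nu : set R -> \bar R) : Prop :=
  exists f : R -> R,
    [/\ (forall x y, suppR mu x -> suppR mu y -> `|f x - f y| = `|x - y|),
        (forall x, suppR mu x -> suppR nu (f x)),
        (forall y, suppR nu y -> exists2 x, suppR mu x & f x = y) &
        (forall A : set R, measurable A -> nu A = mu (suppR mu `&` f @^-1` A))].

Definition maximal_measurement {R : realType} (d : measure_display)
    (T : measurableType d) (dist : T -> T -> R) (muX : set T -> \bar R)
    (mu : set R -> \bar R) : Prop :=
  measurement1 dist muX mu /\
  forall nu : probability R R,
    measurement1 dist muX nu -> lip_le mu nu -> mm_iso_R nu mu.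

From mathcomp Require Import all_boot all_order all_algebra.
From mathcomp Require Import all_classical all_reals all_analysis.
From mathcomp Require Import measurable_realfun lra.
Import Order.TTheory GRing.Theory Num.Theory.
Local Open Scope classical_set_scope.
Local Open Scope ring_scope.

(* Let nu be in M(X;1) with mu ≺ nu via h : supp nu -> supp mu, and D = diam X.
   As a push-forward of muX by a 1-Lipschitz map, nu has support of diameter
   at most D; as the push-forward of nu by h, mu has its support in the closure
   of h(supp nu), whose diameter is therefore D.  On the line, a 1-Lipschitz map
   from a set of diameter at most D onto a set of diameter D is an isometry: if
   h a, h b almost realise D, every point x is pinned near both ends, so that
   h x - h a = ±(x - a) up to a small error, with a sign independent of x.
   Finally h is onto supp mu: points x with h x close to y satisfy
   |x - a| ≈ |y - h a|, hence accumulate at a + |y - h a| or a - |y - h a|,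
   a point of the closed set supp nu that h maps to y. *)

Ltac split_norms :=
  repeat match goal with |- context [ `|?t| ] =>
    let H := fresh in
    case: (lerP 0 t) => H; [rewrite (ger0_norm H) | rewrite (ltr0_norm H)]
  end.

Section RigidityOnTheLine.
Context {R : realFieldType}.

Lemma translate_approx (x a b X A B D e : R) :
  a <= b -> A <= B -> B - A <= b - a -> b - a <= D -> D - e <= B - A ->
  `|x - a| <= D -> `|x - b| <= D -> `|X - A| <= `|x - a| -> `|X - B| <= `|x - b| ->
  `|(X - A) - (x - a)| <= 4 * e.
Proof. by split_norms; lra. Qed.

Lemma dist_ge_of_translate_approx (x y a X Y A e : R) :
  `|(X - A) - (x - a)| <= 4 * e -> `|(Y - A) - (y - a)| <= 4 * e ->
  `|x - y| - 8 * e <= `|X - Y|.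
Proof. by split_norms; lra. Qed.

Lemma dist_ge_of_far_pair {x y a b X Y A B D e : R} :
  `|X - A| <= `|x - a| -> `|X - B| <= `|x - b| ->
  `|Y - A| <= `|y - a| -> `|Y - B| <= `|y - b| -> `|A - B| <= `|a - b| ->
  `|x - a| <= D -> `|x - b| <= D -> `|y - a| <= D -> `|y - b| <= D ->
  `|a - b| <= D -> D - e <= `|A - B| ->
  `|x - y| - 8 * e <= `|X - Y|.
Proof.
have normNB (u v : R) : `|- u - - v| = `|u - v| by rewrite -opprD normrN.
wlog ab : x y a b / a <= b.
  move=> base; have [ab|] := boolP (a <= b); first exact: base.
  rewrite -ltNge => /ltW ba.
  by have := base (- x) (- y) (- a) (- b); rewrite !normNB lerN2; apply.
wlog AB : X Y A B / A <= B.
  move=> base; have [AB|] := boolP (A <= B); first exact: base.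
  rewrite -ltNge => /ltW BA.
  by have := base (- X) (- Y) (- A) (- B); rewrite !normNB lerN2; apply.
rewrite [`|a - b|]distrC [`|A - B|]distrC.
rewrite (ger0_norm (x := b - a)) ?subr_ge0 // (ger0_norm (x := B - A)) ?subr_ge0 //.
move=> Xa Xb Ya Yb BAba xa xb ya yb baD DeBA.
by apply: (dist_ge_of_translate_approx _ _ a _ _ A); apply: (translate_approx _ _ b _ _ B D).
Qed.

Lemma near_sub_of_far_add {x a X A Y e0 e : R} :
  `|x - a| = `|X - A| -> `|X - Y| < e -> e <= e0 ->
  e0 <= `|x - (a + `|Y - A|)| -> `|x - (a - `|Y - A|)| < e.
Proof. by split_norms; lra. Qed.

End RigidityOnTheLine.

Lemma measure_gt0_nonempty {d} {T : measurableType d} {R : realType}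
    {m : {measure set T -> \bar R}} {A : set T} :
  (0 < m A)%E -> A !=set0.
Proof.
by move=> mA_gt0; apply/set0P; apply: contra_ltN mA_gt0 => /eqP ->; rewrite measure0.
Qed.

Section Diameter.
Context {R : realType} {T : Type} (dist : T -> T -> R).

Lemma diam_ub {A : set T} {x y : T} : A x -> A y -> ((dist x y)%:E <= diam dist A)%E.
Proof. by move=> Ax Ay; apply: ereal_sup_ubound; exists x, y. Qed.

Lemma diam_finite (A : set T) : A !=set0 -> (diam dist A < +oo)%E ->
  exists D : R, diam dist A = D%:E.
Proof.
move=> [x Ax] lt_oo; have := diam_ub Ax Ax.
by case: (diam dist A) lt_oo => [D _ _| |]//; exists D.
Qed.

End Diameter.

Definition approx_preimage {R : realFieldType} (S : set R) (h : R -> R) (y c : R) :=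
  forall e, 0 < e -> exists x, [/\ S x, `|h x - y| < e & `|x - c| < e].

Section IsometryOnTheLine.
Context {R : realFieldType} {S : set R} {h : R -> R}.

Lemma isometry_of_far_pairs {D : R} :
  (forall x y, S x -> S y -> `|h x - h y| <= `|x - y|) ->
  (forall x y, S x -> S y -> `|x - y| <= D) ->
  (forall e, 0 < e -> exists a b, [/\ S a, S b & D - e <= `|h a - h b|]) ->
  forall x y, S x -> S y -> `|h x - h y| = `|x - y|.
Proof.
move=> lip_h SD far x y Sx Sy; apply/eqP; rewrite eq_le lip_h //=.
apply/ler_addgt0Pr => e e_gt0; have e8_gt0 : 0 < e / 8 by rewrite divr_gt0.
have [a [b [Sa Sb hab]]] := far _ e8_gt0.
have := dist_ge_of_far_pair (lip_h _ _ Sx Sa) (lip_h _ _ Sx Sb)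
  (lip_h _ _ Sy Sa) (lip_h _ _ Sy Sb) (lip_h _ _ Sa Sb)
  (SD _ _ Sx Sa) (SD _ _ Sx Sb) (SD _ _ Sy Sa) (SD _ _ Sy Sb) (SD _ _ Sa Sb) hab.
lra.
Qed.

Lemma isometry_approx_preimage {y a : R} :
  (forall x z, S x -> S z -> `|h x - h z| = `|x - z|) -> S a ->
  (forall e, 0 < e -> exists2 x, S x & `|y - h x| < e) ->
  approx_preimage S h y (a + `|y - h a|) \/ approx_preimage S h y (a - `|y - h a|).
Proof.
move=> iso Sa near_y.
have [|/existsNP [e0 /not_implyP [e0_gt0 /forallNP far]]] :=
  pselect (approx_preimage S h y (a + `|y - h a|)); first by left.
right => e e_gt0; pose e1 := Order.min e e0.
have e1_gt0 : 0 < e1 by rewrite lt_min e_gt0 e0_gt0.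
have [e1e e1e0] : e1 <= e /\ e1 <= e0 by apply/andP; rewrite -le_min.
have [x Sx yx] := near_y _ e1_gt0; rewrite distrC in yx.
exists x; split => //; first exact: lt_le_trans yx e1e.
have far_x : e0 <= `|x - (a + `|y - h a|)|.
  rewrite leNgt; apply/negP => close; apply: (far x); split => //.
  exact: lt_le_trans yx e1e0.
exact: lt_le_trans (near_sub_of_far_add (esym (iso _ _ Sx Sa)) yx e1e0 far_x) e1e.
Qed.

End IsometryOnTheLine.

Section SupportOnTheLine.
Context {R : realType}.

Lemma measurable_distR_ball (c r : R) : measurable [set y | distR c y < r].
Proof. by have := measurable_ball c r; rewrite -ball_normE. Qed.

Lemma suppR_push_near {d} {T : measurableType d} {m : {measure set T -> \bar R}}
    {P : set T} {f : T -> R} {nu : set R -> \bar R} {y r : R} :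
  (forall A, measurable A -> nu A = m (P `&` f @^-1` A)) ->
  suppR nu y -> 0 < r -> exists2 t, P t & `|y - f t| < r.
Proof.
move=> push nu_y r_gt0; have := nu_y r r_gt0.
rewrite push; last exact: measurable_distR_ball.
by move/measure_gt0_nonempty => [t [Pt yt]]; exists t.
Qed.

Lemma suppR_closed (nu : {measure set R -> \bar R}) c :
  (forall r, 0 < r -> exists2 x, suppR nu x & `|x - c| < r) -> suppR nu c.
Proof.
move=> near_c r r_gt0; have r2_gt0 : 0 < r / 2 by rewrite divr_gt0.
have [x nu_x xc] := near_c _ r2_gt0.
apply: (lt_le_trans (nu_x _ r2_gt0)); apply: le_measure; rewrite ?inE;
  try exact: measurable_distR_ball.
by move=> z; rewrite /distR /=; move: xc; split_norms; lra.
Qed.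

Lemma lipschitz_push_suppR_dist_le {d} {T : measurableType d}
    {m : {measure set T -> \bar R}} {dist : T -> T -> R} {f : T -> R}
    {nu : set R -> \bar R} {D : R} :
  (forall t s, dist t s <= D) -> lipschitz1 dist f ->
  (forall A, measurable A -> nu A = m (f @^-1` A)) ->
  forall x y, suppR nu x -> suppR nu y -> `|x - y| <= D.
Proof.
move=> distD lip_f push x y nu_x nu_y.
have {}push A : measurable A -> nu A = m (setT `&` f @^-1` A).
  by rewrite setTI; apply: push.
apply/ler_addgt0Pr => e e_gt0; have e2_gt0 : 0 < e / 2 by rewrite divr_gt0.
have [t _ xt] := suppR_push_near push nu_x e2_gt0.
have [s _ ys] := suppR_push_near push nu_y e2_gt0.
have fts : `|f t - f s| <= D := le_trans (lip_f t s) (distD t s).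
by move: xt ys fts; split_norms; lra.
Qed.

Lemma suppR_push_far_pair {d} {T : measurableType d}
    {m : {measure set T -> \bar R}} {P : set T} {h : T -> R}
    {mu : set R -> \bar R} {D : R} :
  diam distR (suppR mu) = D%:E ->
  (forall A, measurable A -> mu A = m (P `&` h @^-1` A)) ->
  forall e, 0 < e -> exists a b, [/\ P a, P b & D - e <= `|h a - h b|].
Proof.
move=> diam_mu push e e_gt0; have e3_gt0 : 0 < e / 3 by rewrite divr_gt0.
have : ((D - e / 3)%:E < diam distR (suppR mu))%E by rewrite diam_mu lte_fin; lra.
move/ereal_sup_gt => [_ [p [q [mu_p mu_q ->]]]]; rewrite lte_fin /distR => pq.
have [a Pa pa] := suppR_push_near push mu_p e3_gt0.
have [b Pb qb] := suppR_push_near push mu_q e3_gt0.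
by exists a, b; split => //; move: pq pa qb; split_norms; lra.
Qed.

Lemma approx_preimage_suppR {nu : {measure set R -> \bar R}} {h : R -> R} {y c : R} :
  (forall x z, suppR nu x -> suppR nu z -> `|h x - h z| <= `|x - z|) ->
  approx_preimage (suppR nu) h y c -> suppR nu c /\ h c = y.
Proof.
move=> lip_h approx.
have nu_c : suppR nu c.
  apply: suppR_closed => r r_gt0.
  by have [x [nu_x _ xc]] := approx r r_gt0; exists x.
split => //; apply/eqP; rewrite -subr_eq0 -normr_le0.
apply/ler_addgt0Pr => e e_gt0; rewrite add0r.
have e2_gt0 : 0 < e / 2 by rewrite divr_gt0.
have [x [nu_x hxy xc]] := approx _ e2_gt0.
by move: (lip_h _ _ nu_c nu_x) hxy xc; split_norms; lra.
Qed.

Lemma suppR_isometry_onto (nu mu : {measure set R -> \bar R}) (h : R -> R) :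
  (forall x z, suppR nu x -> suppR nu z -> `|h x - h z| = `|x - z|) ->
  (forall A, measurable A -> mu A = nu (suppR nu `&` h @^-1` A)) ->
  forall y, suppR mu y -> exists2 x, suppR nu x & h x = y.
Proof.
move=> iso push y mu_y.
have near_y e : 0 < e -> exists2 x, suppR nu x & `|y - h x| < e.
  by move=> e_gt0; apply: suppR_push_near push mu_y e_gt0.
have lip_h x z : suppR nu x -> suppR nu z -> `|h x - h z| <= `|x - z|.
  by move=> nu_x nu_z; rewrite iso.
have [a nu_a _] := near_y _ ltr01.
by case: (isometry_approx_preimage iso nu_a near_y)
  => /(approx_preimage_suppR lip_h) [nu_c hc]; exact: ex_intro2 nu_c hc.
Qed.

End SupportOnTheLine.

Theorem proposition1p2 (R : realType) (d : measure_display) (T : measurableType d)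
    (dist : T -> T -> R) (muX : probability T R) :
  mm_space dist ->
  supp dist muX = setT ->
  forall mu : probability R R,
    measurement1 dist muX mu ->
    diam distR (suppR mu) = diam dist setT ->
    (diam dist setT < +oo)%E ->
    maximal_measurement dist muX mu.
Proof.
move=> _ _ mu [f [lip_f push_f]] diam_mu diam_X_fin; split; first by exists f.
move=> nu [g [lip_g push_g]] [h [lip_h h_supp push_h]].
have [D diam_X] : exists D : R, diam dist setT = D%:E.
  apply: diam_finite diam_X_fin; apply: (measure_gt0_nonempty (m := muX)).
  by have := probability_setT muX; move=> /= ->; rewrite lte01.
have distD t s : dist t s <= D by rewrite -lee_fin -diam_X; apply: diam_ub.
rewrite diam_X in diam_mu.
have iso := isometry_of_far_pairs lip_h
  (lipschitz_push_suppR_dist_le distD lip_g push_g) (suppR_push_far_pair diam_mu push_h).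
by exists h; split => //; apply: suppR_isometry_onto iso push_h.
Qed.
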